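(* Let $m>n$ be coprime positive integers, $\lambda\in X$, $\Lambda=x(\lambda)$ and $\alpha=\epsilon_i-\delta_j$ ($i\in[n]$, $j\in[m]$). If $\Lambda\in\Pi_\alpha$, then either $\lambda\in X_\alpha$, or $(m,1^{n-1})\subseteq\lambda$ (i.e. $\lambda_1=m$ and $\lambda_n\ge1$) and $\alpha=\epsilon_n-\delta_1$.
   Context: $X$ is the set of partitions $\lambda=(\lambda_1\ge\dots\ge\lambda_n\ge0)$ with $\lambda_1\le m$, drawn in an $n\times m$ rectangle with rows $\epsilon_1,\dots,\epsilon_n$ top to bottom and columns $\delta_1,\dots,\delta_m$; the diagram consists of boxes $\epsilon_i-\delta_j$ with $j\le\lambda_{n+1-i}$; $\lambda'_j=\#\{i:\lambda_i\ge j\}$. $X_\alpha$ is the set of $\lambda$ for which the box $\alpha$ is an outer corner (not in $\lambda$, and adding it gives an element of $X$). $x(\lambda)=(a_1,\dots,a_n|b_1,\dots,b_m)$ with $a_i=m(n-i)+n\lambda_{n+1-i}$, $b_j=n(j-1)+m\lambda'_j$. $\Pi_\alpha=\{\Lambda: a_i=b_j\}$. *)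

From mathcomp Require Import all_boot.
Set Implicit Arguments. Unset Strict Implicit. Unset Printing Implicit Defensive.

(* Partitions lambda = (lambda_1 >= ... >= lambda_n >= 0) are represented by
   functions lam : nat -> nat, 1-indexed: lambda_k = lam k for 1 <= k <= n.
   Values of lam outside 1..n are never used. *)

Definition in_X (n m : nat) (lam : nat -> nat) : Prop :=
  (forall k, 1 <= k -> k < n -> lam k.+1 <= lam k) /\
  (forall k, 1 <= k <= n -> lam k <= m).

Definition conj_part (n : nat) (lam : nat -> nat) (j : nat) : nat :=
  count (fun k => j <= lam k) (iota 1 n).

(* the box eps_i - delta_j (1 <= i <= n, 1 <= j <= m) lies in the diagram of lambda *)
Definition in_diagram (n : nat) (lam : nat -> nat) (i j : nat) : Prop :=
  j <= lam (n.+1 - i).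

Definition in_X_alpha (n m : nat) (lam : nat -> nat) (i j : nat) : Prop :=
  ~ in_diagram n lam i j /\
  exists mu, in_X n m mu /\
    forall i' j', 1 <= i' <= n -> 1 <= j' <= m ->
      (in_diagram n mu i' j' <-> (in_diagram n lam i' j' \/ (i' = i /\ j' = j))).

Definition xa (n m : nat) (lam : nat -> nat) (i : nat) : nat :=
  m * (n - i) + n * lam (n.+1 - i).
Definition xb (n m : nat) (lam : nat -> nat) (j : nat) : nat :=
  n * (j - 1) + m * conj_part n lam j.

Definition in_Pi (n m : nat) (lam : nat -> nat) (i j : nat) : Prop :=
  xa n m lam i = xb n m lam j.

From mathcomp Require Import all_boot zify.
Set Implicit Arguments. Unset Strict Implicit. Unset Printing Implicit Defensive.

(* Reducing a_i = b_j modulo m and using coprimality gives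
   lambda_(n+1-i) = j - 1 (mod m); since both sides lie in [0, m] this forces
   either lambda_(n+1-i) = j - 1, and then lambda'_j = n - i, or
   lambda_(n+1-i) = m with j = 1, and then lambda'_1 = n and i = n.  In the
   first case the box alpha sits right after the end of row n+1-i, and
   lambda'_j = n - i says that the row above is long enough, so alpha is an
   outer corner. *)

Lemma coprime_mul_eq0 (m n d e : nat) :
  coprime m n -> n * d = m * e -> d < m -> d = 0.
Proof.
move=> co ndme dm; apply/eqP; rewrite eqn0Ngt; apply/negP => d0.
have : m %| n * d by rewrite ndme dvdn_mulr.
by rewrite Gauss_dvdr // gtnNdvd.
Qed.

Lemma coprime_lin_eq (m n a b c L : nat) :
  coprime m n -> b < m -> L <= m -> c <= n ->
  m * a + n * L = n * b + m * c ->
  (L = b /\ c = a) \/ [/\ b = 0, L = m, a = 0 & c = n].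
Proof.
move=> co bm Lm cn E.
have m0 : 0 < m by apply: leq_ltn_trans bm.
have [bL | Lb] := leqP b L.
- have nLb : n * (L - b) = m * (c - a).
    have : n * b <= n * L by rewrite leq_mul2l bL orbT.
    rewrite !mulnBr; lia.
  have [Lbm | ] := ltnP (L - b) m.
  + have := coprime_mul_eq0 co nLb Lbm; left; nia.
  + move=> mLb; have [eL eb] : L = m /\ b = 0 by lia.
    move: nLb; rewrite eL eb subn0 mulnC => /eqP.
    rewrite eqn_mul2l gtn_eqF //= => /eqP nca.
    by right; split => //; lia.
- have nbL : n * (b - L) = m * (a - c).
    have : n * L <= n * b by rewrite leq_mul2l (ltnW Lb) orbT.
    rewrite !mulnBr; lia.
  have := coprime_mul_eq0 co nbL; lia.
Qed.

Lemma in_X_nonincr (n m : nat) (lam : nat -> nat) (k l : nat) :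
  in_X n m lam -> 1 <= k <= l -> l <= n -> lam l <= lam k.
Proof.
move=> [lam_dec _] /andP[k1]; elim: l => [|l IH] kl ln; first lia.
have [-> // | kl'] := eqVneq k l.+1.
apply: leq_trans (lam_dec l _ ln) (IH _ (ltnW ln)); lia.
Qed.

Lemma conj_part_le (n : nat) (lam : nat -> nat) (j : nat) : conj_part n lam j <= n.
Proof. by rewrite -[leqRHS](size_iota 1 n) count_size. Qed.

Lemma conj_part_le_row (n m : nat) (lam : nat -> nat) (r j : nat) :
  in_X n m lam -> 1 <= r <= n -> lam r < j -> conj_part n lam j <= r.-1.
Proof.
move=> lamX /andP[r1 rn] lam_r_j.
rewrite /conj_part -(subnKC (leq_trans (leq_pred r) rn)) iotaD count_cat.
rewrite -[leqRHS]addn0; apply: leq_add.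
- by rewrite -[leqRHS](size_iota 1 r.-1) count_size.
- rewrite leqNgt -has_count; apply/hasPn => k.
  rewrite mem_iota add1n prednK // => /andP[rk kn].
  rewrite -ltnNge; apply: leq_ltn_trans lam_r_j.
  apply: in_X_nonincr lamX _ _; lia.
Qed.

Lemma conj_part_full (n : nat) (lam : nat -> nat) (j k : nat) :
  conj_part n lam j = n -> 1 <= k <= n -> j <= lam k.
Proof.
move=> full kn; have /allP : all (fun k => j <= lam k) (iota 1 n).
  by rewrite all_count size_iota -[X in _ == X]full.
by apply; rewrite mem_iota; lia.
Qed.

Definition set_row (lam : nat -> nat) (r v : nat) : nat -> nat :=
  fun k => if k == r then v else lam k.

Lemma in_X_set_row (n m : nat) (lam : nat -> nat) (r v : nat) :
  in_X n m lam -> 1 <= r <= n -> lam r <= v <= m ->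
  (1 < r -> v <= lam r.-1) -> in_X n m (set_row lam r v).
Proof.
move=> [lam_dec lam_m] rn /andP[lam_r_v vm] above; rewrite /set_row.
split=> [k k1 kn | k kn]; last by case: ifP => // _; exact: lam_m.
case: eqVneq => [ek1r | _]; case: eqVneq => [ekr | _].
- lia.
- by rewrite -ek1r in above; apply: above; lia.
- by apply: leq_trans lam_r_v; rewrite -ekr; exact: lam_dec.
- exact: lam_dec.
Qed.

Lemma in_X_alpha_set_row (n m : nat) (lam : nat -> nat) (i j : nat) :
  in_X n m lam -> 1 <= i <= n -> 1 <= j <= m ->
  lam (n.+1 - i) = j - 1 -> (i < n -> j <= lam (n - i)) ->
  in_X_alpha n m lam i j.
Proof.
move=> lamX hi hj lam_r above; rewrite /in_X_alpha /in_diagram lam_r.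
split; first lia.
exists (set_row lam (n.+1 - i) j); split.
- apply: in_X_set_row => //; first lia.
  + by rewrite lam_r; apply/andP; split; lia.
  + have -> : (n.+1 - i).-1 = n - i by lia.
    by move=> r1; apply: above; lia.
- move=> i' j' hi' hj'; rewrite /set_row.
  case: eqVneq => [er | ner].
  + have -> : i' = i by lia.
    lia.
  + have : i' <> i by move=> ei; rewrite ei eqxx in ner.
    tauto.
Qed.

Theorem lemma4p5 (n m : nat) (lam : nat -> nat) (i j : nat) :
  0 < n -> n < m -> coprime m n ->
  in_X n m lam ->
  1 <= i <= n -> 1 <= j <= m ->
  in_Pi n m lam i j ->
  in_X_alpha n m lam i j \/
  ((lam 1 = m /\ 1 <= lam n) /\ (i = n /\ j = 1)).
Proof.
move=> _ _ co lamX hi hj; rewrite /in_Pi /xa /xb => Pi.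
have lam_m : lam (n.+1 - i) <= m by apply: lamX.2; lia.
have jm : j - 1 < m by lia.
have [[lam_r conj_j] | [j1 lam_r i_n conj_1]] :=
  coprime_lin_eq co jm lam_m (conj_part_le n lam j) Pi.
- left; apply: in_X_alpha_set_row => // i_lt_n.
  rewrite leqNgt; apply/negP => /(conj_part_le_row lamX).
  rewrite conj_j; lia.
- have [ei ej] : i = n /\ j = 1 by lia.
  subst i j; right; split=> //; split; first by rewrite subSnn in lam_r.
  by apply: conj_part_full conj_1 _; lia.
Qed.
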